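(* Consider the model described in the context with private signals that are conditionally independent given $H$ but not necessarily identically distributed, and with a unanimity fusion rule, i.e. $L=1$ (\textsc{or}) or $L=N$ (\textsc{and}). Then secret voting is optimal: the minimum team Bayes risk under public voting, for any order in which the agents act, equals the minimum team Bayes risk under secret voting, which (for $L=1$) is $\min_{\lambda_1,\dots,\lambda_N}\big[c_{10}p_0\big(1-\prod_{n=1}^N(1-P^{\rm I}_{e,n})\big)+c_{01}p_1\prod_{n=1}^N P^{\rm II}_{e,n}\big]$ and (for $L=N$) is $\min_{\lambda_1,\dots,\lambda_N}\big[c_{10}p_0\prod_{n=1}^N P^{\rm I}_{e,n}+c_{01}p_1\big(1-\prod_{n=1}^N(1-P^{\rm II}_{e,n})\big)\big]$. Moreover, there is an optimal public-voting strategy in which each agent uses her optimal secret-voting threshold regardless of the public signals and of her position in the order; thus neither the public signals nor the ordering of agents affects the optimal decision rules or the resulting performance.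
   Context: Binary hypothesis $H\in\{0,1\}$ with prior $p_0=\mathbb P\{H=0\}\in(0,1)$, $p_1=1-p_0$. Agents $n=1,\dots,N$ each observe a private signal $Y_n$ with likelihood $f_{Y_n|H}(y\mid h)$; the $Y_n$ are conditionally independent given $H$, and each likelihood ratio $f_{Y_n|H}(y\mid 1)/f_{Y_n|H}(y\mid 0)$ is strictly increasing in $y$. Each agent makes a local decision $\widehat H_n\in\{0,1\}$ by a threshold test: $\widehat H_n=1$ iff $Y_n\ge$ (her threshold). Local error probabilities: $P^{\rm I}_{e,n}=\mathbb P\{\widehat H_n=1\mid H=0\}$, $P^{\rm II}_{e,n}=\mathbb P\{\widehat H_n=0\mid H=1\}$, determined by Agent $n$'s threshold $\lambda_n$. The team decision uses the $L$-out-of-$N$ fusion rule: $\widehat H=1$ iff $\sum_{n=1}^N\widehat H_n\ge L$. The team Bayes risk is $R=c_{10}p_0\,\mathbb P\{\widehat H=1\mid H=0\}+c_{01}p_1\,\mathbb P\{\widehat H=0\mid H=1\}$ with costs $c_{10},c_{01}>0$; ''optimal'' means minimizing $R$ over all allowed thresholds. Secret voting: each Agent $n$ uses a single threshold $\lambda_n$ (her decision depends only on $Y_n$). Public voting: agents decide in some fixed order, each agent observes all earlier agents' decisions (the ''public signals'') and uses a threshold that may depend on the observed decisions. *)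

From Stdlib Require Import Reals List Permutation.
Import ListNotations.
Open Scope R_scope.

(* Signal model, abstracted to what the threshold tests see.
   F n h lam = P{ Y_n < lam | H = h }  (conditional CDF, left-limit version),
   so Agent n with threshold lam (decide 1 iff Y_n >= lam) has
   P^I_{e,n}  = P{Y_n >= lam | H=0} = 1 - F n false lam,
   P^II_{e,n} = P{Y_n <  lam | H=1} = F n true lam.
   Hypothesis h is encoded as a bool: false = H=0, true = H=1. *)

Definition PeI (F : nat -> bool -> R -> R) (n : nat) (lam : R) : R :=
  1 - F n false lam.
Definition PeII (F : nat -> bool -> R -> R) (n : nat) (lam : R) : R :=
  F n true lam.

Definition p_one (F : nat -> bool -> R -> R) (h : bool) (n : nat) (lam : R) : R :=
  if h then 1 - PeII F n lam else PeI F n lam.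

Fixpoint count_ones (l : list bool) : nat :=
  match l with
  | [] => 0%nat
  | b :: t => ((if b then 1 else 0) + count_ones t)%nat
  end.

(* A (public-voting) strategy: s n hist = threshold used by agent n when the
   public decisions of the earlier agents (in acting order) are hist.
   Secret voting = strategies ignoring hist.
   prob_team1 F L h ord s hist = P{ team decides 1 | H = h, earlier public
   decisions = hist }, when the agents in ord still have to act, in that order.
   By conditional independence of the Y_n given H, agent n's decision is
   independent of earlier decisions given H, so this recursion is the exact
   law of the L-out-of-N fusion outcome. *)
Fixpoint prob_team1 (F : nat -> bool -> R -> R) (L : nat) (h : bool)
    (ord : list nat) (s : nat -> list bool -> R) (hist : list bool) : R :=
  match ord with
  | [] => if Nat.leb L (count_ones hist) then 1 else 0
  | a :: rest =>
      let q := p_one F h a (s a hist) in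
      q * prob_team1 F L h rest s (hist ++ [true])
      + (1 - q) * prob_team1 F L h rest s (hist ++ [false])
  end.

Definition team_risk (F : nat -> bool -> R -> R) (L : nat) (p0 c10 c01 : R)
    (ord : list nat) (s : nat -> list bool -> R) : R :=
  c10 * p0 * prob_team1 F L false ord s []
  + c01 * (1 - p0) * (1 - prob_team1 F L true ord s []).

Definition secret_risk (F : nat -> bool -> R -> R) (N L : nat) (p0 c10 c01 : R)
    (lam : nat -> R) : R :=
  team_risk F L p0 c10 c01 (seq 0 N) (fun n _ => lam n).

Definition prodR (l : list R) : R := fold_right Rmult 1 l.

Definition valid_cdfs (F : nat -> bool -> R -> R) : Prop :=
  forall n h, (forall x, 0 <= F n h x <= 1) /\
              (forall x y, x <= y -> F n h x <= F n h y).

(* Under a unanimity rule the team outcome is decided by a single event: for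
   OR the team says 0 iff every agent says 0, for AND it says 1 iff every agent
   says 1.  Along the unique history on which this event can still occur, each
   agent acts exactly once and with one particular threshold, so the
   probability of the event is the product, over the agents, of their
   probabilities of casting that vote with those thresholds.  Hence every
   public strategy has the same risk as the secret strategy that always uses
   these on-path thresholds, and conversely a secret strategy has the same risk
   in every acting order because the product does not depend on the order. *)

From Stdlib Require Import Reals List Permutation Lia.
Import ListNotations.
Open Scope R_scope.

Definition vote_prob (b : bool) (q : R) : R := if b then q else 1 - q.

Fixpoint prob_all_vote (F : nat -> bool -> R -> R) (b h : bool) (ord : list nat)
    (s : nat -> list bool -> R) (hist : list bool) : R :=
  match ord with
  | [] => 1
  | a :: rest =>
      vote_prob b (p_one F h a (s a hist)) * prob_all_vote F b h rest s (hist ++ [b])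
  end.

Lemma count_ones_rcons (l : list bool) (b : bool) :
  count_ones (l ++ [b]) = (count_ones l + if b then 1 else 0)%nat.
Proof.
  induction l as [|x l IH]; simpl; [now destruct b | rewrite IH; lia].
Qed.

Section TeamProbability.

Variables (F : nat -> bool -> R -> R) (L : nat) (h : bool).

Lemma prob_team1_decided ord s hist :
  (L <= count_ones hist)%nat -> prob_team1 F L h ord s hist = 1.
Proof.
  revert hist; induction ord as [|a rest IH]; intros hist Hcount; simpl.
  - apply Nat.leb_le in Hcount; now rewrite Hcount.
  - rewrite !IH; [ring | |]; rewrite count_ones_rcons; lia.
Qed.

Lemma prob_team1_unreachable ord s hist :
  (count_ones hist + length ord < L)%nat -> prob_team1 F L h ord s hist = 0.
Proof.
  revert hist; induction ord as [|a rest IH]; intros hist Hcount; simpl in *.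
  - destruct (Nat.leb L (count_ones hist)) eqn:E; [apply Nat.leb_le in E; lia | easy].
  - rewrite !IH; [ring | |]; rewrite count_ones_rcons; lia.
Qed.

Lemma prob_team1_and ord s hist :
  (count_ones hist + length ord)%nat = L ->
  prob_team1 F L h ord s hist = prob_all_vote F true h ord s hist.
Proof.
  revert hist; induction ord as [|a rest IH]; intros hist Hcount; simpl in *.
  - replace (Nat.leb L (count_ones hist)) with true; [easy|].
    symmetry; apply Nat.leb_le; lia.
  - rewrite (prob_team1_unreachable rest s (hist ++ [false])) by (rewrite count_ones_rcons; lia).
    rewrite IH by (rewrite count_ones_rcons; lia).
    unfold vote_prob; ring.
Qed.

End TeamProbability.

Lemma prob_team1_or F h ord s hist :
  count_ones hist = 0%nat ->
  prob_team1 F 1 h ord s hist = 1 - prob_all_vote F false h ord s hist.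
Proof.
  revert hist; induction ord as [|a rest IH]; intros hist Hcount; simpl.
  - rewrite Hcount; simpl; ring.
  - rewrite prob_team1_decided by (rewrite count_ones_rcons; lia).
    rewrite IH by (rewrite count_ones_rcons; lia).
    unfold vote_prob; ring.
Qed.

Lemma prob_team1_unanimity F N L h ord s :
  (L = 1%nat \/ L = N) -> length ord = N ->
  prob_team1 F L h ord s [] =
  if Nat.eqb L 1 then 1 - prob_all_vote F false h ord s []
  else prob_all_vote F true h ord s [].
Proof.
  intros HL Hlen; destruct (Nat.eqb_spec L 1) as [-> | HL1].
  - now apply prob_team1_or.
  - apply prob_team1_and; simpl; lia.
Qed.

Lemma prob_all_vote_secret F b h ord lam hist :
  prob_all_vote F b h ord (fun n _ => lam n) hist =
  prodR (map (fun a => vote_prob b (p_one F h a (lam a))) ord).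
Proof.
  revert hist; induction ord as [|a rest IH]; intros hist; simpl; [easy|].
  now rewrite IH.
Qed.

(* The secret thresholds are those used along the all-[b] history. *)
Lemma prob_all_vote_secretize F b ord s hist :
  NoDup ord -> exists lam : nat -> R, forall h,
    prob_all_vote F b h ord s hist =
    prodR (map (fun a => vote_prob b (p_one F h a (lam a))) ord).
Proof.
  revert hist; induction ord as [|a rest IH]; intros hist Hnd.
  - now exists (fun _ => 0).
  - apply NoDup_cons_iff in Hnd as [Ha Hnd].
    destruct (IH (hist ++ [b]) Hnd) as [lam Hlam].
    exists (fun n => if Nat.eqb n a then s a hist else lam n); intros h; simpl.
    rewrite Nat.eqb_refl, Hlam; do 2 f_equal.
    apply map_ext_in; intros x Hx.
    destruct (Nat.eqb_spec x a) as [-> | _]; [contradiction | easy].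
Qed.

Lemma prodR_perm (l l' : list R) : Permutation l l' -> prodR l = prodR l'.
Proof. induction 1; simpl; try ring; congruence. Qed.

Section Risk.

Variables (F : nat -> bool -> R -> R) (N L : nat) (p0 c10 c01 : R).
Hypothesis unanimity : L = 1%nat \/ L = N.

Lemma secret_risk_closed_form lam :
  secret_risk F N L p0 c10 c01 lam =
  if Nat.eqb L 1 then
    c10 * p0 * (1 - prodR (map (fun n => 1 - PeI F n (lam n)) (seq 0 N)))
    + c01 * (1 - p0) * prodR (map (fun n => PeII F n (lam n)) (seq 0 N))
  else
    c10 * p0 * prodR (map (fun n => PeI F n (lam n)) (seq 0 N))
    + c01 * (1 - p0) * (1 - prodR (map (fun n => 1 - PeII F n (lam n)) (seq 0 N))).
Proof.
  unfold secret_risk, team_risk.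
  rewrite !(prob_team1_unanimity F N L) by (auto; apply length_seq).
  rewrite !prob_all_vote_secret.
  destruct (Nat.eqb L 1); simpl; [|easy].
  rewrite (map_ext (fun a => 1 - (1 - PeII F a (lam a))) (fun n => PeII F n (lam n)))
    by (intro; ring).
  ring.
Qed.

Section Order.

Variable ord : list nat.
Hypothesis ord_perm : Permutation (seq 0 N) ord.

Let ord_length : length ord = N.
Proof. now rewrite <- (Permutation_length ord_perm), length_seq. Qed.

Let prodR_ord (f : nat -> R) : prodR (map f ord) = prodR (map f (seq 0 N)).
Proof. apply prodR_perm, Permutation_map, Permutation_sym, ord_perm. Qed.

Lemma team_risk_secret lam :
  team_risk F L p0 c10 c01 ord (fun n _ => lam n) = secret_risk F N L p0 c10 c01 lam.
Proof.
  unfold secret_risk, team_risk.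
  rewrite !(prob_team1_unanimity F N L _ ord), !(prob_team1_unanimity F N L _ (seq 0 N))
    by (auto; apply length_seq).
  now rewrite !prob_all_vote_secret, !prodR_ord.
Qed.

Lemma team_risk_secretize s :
  exists lam, secret_risk F N L p0 c10 c01 lam = team_risk F L p0 c10 c01 ord s.
Proof.
  assert (ord_nodup : NoDup ord) by apply (Permutation_NoDup ord_perm), seq_NoDup.
  destruct (prob_all_vote_secretize F (negb (Nat.eqb L 1)) ord s [] ord_nodup)
    as [lam Hlam].
  exists lam; rewrite <- team_risk_secret; unfold team_risk; symmetry.
  rewrite !(prob_team1_unanimity F N L _ ord) by auto.
  destruct (Nat.eqb L 1); simpl in Hlam; now rewrite !Hlam, !prob_all_vote_secret.
Qed.

End Order.

End Risk.

Theorem theorem3 (F : nat -> bool -> R -> R) (N L : nat) (p0 c10 c01 : R) :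
  valid_cdfs F ->
  0 < p0 < 1 -> 0 < c10 -> 0 < c01 ->
  (1 <= N)%nat ->
  (L = 1%nat \/ L = N) ->
  (forall ord : list nat, Permutation (seq 0 N) ord ->
     forall r : R,
       (exists s : nat -> list bool -> R, team_risk F L p0 c10 c01 ord s = r) <->
       (exists lam : nat -> R, secret_risk F N L p0 c10 c01 lam = r))
  /\ (forall lam : nat -> R,
        secret_risk F N L p0 c10 c01 lam =
        if Nat.eqb L 1 then
          c10 * p0 * (1 - prodR (map (fun n => 1 - PeI F n (lam n)) (seq 0 N)))
          + c01 * (1 - p0) * prodR (map (fun n => PeII F n (lam n)) (seq 0 N))
        else
          c10 * p0 * prodR (map (fun n => PeI F n (lam n)) (seq 0 N))
          + c01 * (1 - p0) * (1 - prodR (map (fun n => 1 - PeII F n (lam n)) (seq 0 N))))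
  /\ (forall lamstar : nat -> R,
        (forall lam : nat -> R,
           secret_risk F N L p0 c10 c01 lamstar <= secret_risk F N L p0 c10 c01 lam) ->
        forall ord : list nat, Permutation (seq 0 N) ord ->
          team_risk F L p0 c10 c01 ord (fun n _ => lamstar n)
            = secret_risk F N L p0 c10 c01 lamstar
          /\ forall s : nat -> list bool -> R,
               team_risk F L p0 c10 c01 ord (fun n _ => lamstar n)
               <= team_risk F L p0 c10 c01 ord s).
Proof.
  intros _ _ _ _ _ HL; split; [|split].
  - intros ord Hord r; split.
    + intros [s <-]; apply (team_risk_secretize F N L p0 c10 c01 HL ord Hord).
    + intros [lam <-]; exists (fun n _ => lam n).
      apply (team_risk_secret F N L p0 c10 c01 HL ord Hord).
  - apply (secret_risk_closed_form F N L p0 c10 c01 HL).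
  - intros lamstar Hopt ord Hord.
    rewrite (team_risk_secret F N L p0 c10 c01 HL ord Hord).
    split; [easy|]; intros s.
    destruct (team_risk_secretize F N L p0 c10 c01 HL ord Hord s) as [lam <-].
    apply Hopt.
Qed.
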